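(* Let $X\subset[0,1]$ with $\overline{\dim}_B(X)=a$. Then $\overline{\dim}_{GB}(X)\ge 2a$.
   Context: For $\delta>0$ and $F\subset\mathbb{R}^d$, $N_\delta(F)$ is the number of cubes of the standard $\delta$-grid in $\mathbb{R}^d$ that intersect $F$, and $\overline{\dim}_B(F)=\limsup_{\delta\to0}\frac{\log N_\delta(F)}{-\log\delta}$. $C_u(X)$ is the set of uniformly continuous real functions on $X$, $\mathrm{graph}(f)=\{(x,f(x)):x\in X\}$, and $\overline{\dim}_{GB}(X)=\sup_{f\in C_u(X)}\overline{\dim}_B(\mathrm{graph}(f))$. *)

From HB Require Import structures.
From mathcomp Require Import all_boot all_order all_algebra.
From mathcomp Require Import all_classical all_reals all_analysis.
Set Implicit Arguments. Unset Strict Implicit. Unset Printing Implicit Defensive.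
Import Order.TTheory GRing.Theory Num.Theory.
Local Open Scope classical_set_scope.
Local Open Scope ring_scope.

Section BoxDim.
Variable R : realType.

Definition grid_cube (d : nat) (delta : R) (k : 'rV[int]_d) : set 'rV[R]_d :=
  [set x | forall i : 'I_d, (k ord0 i)%:~R * delta <= x ord0 i
                            <= ((k ord0 i)%:~R + 1) * delta].

Definition Ndelta (d : nat) (delta : R) (F : set 'rV[R]_d) : \bar R :=
  esum [set k : 'rV[int]_d | grid_cube delta k `&` F !=set0] (fun _ => 1%E).

Definition box_ratio (d : nat) (F : set 'rV[R]_d) (delta : R) : \bar R :=
  match Ndelta delta F with
  | EFin n => (ln n / (- ln delta))%:E
  | +oo%E => +oo%E
  | -oo%E => -oo%E
  end.

Definition upper_box_dim (d : nat) (F : set 'rV[R]_d) : \bar R :=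
  ereal_inf [set ereal_sup [set box_ratio F delta | delta in `]0, e[ ]
            | e in `]0, 1[ ].

Definition embed1 (X : set R) : set 'rV[R]_1 := [set \row_(i < 1) x | x in X].

Definition graph (X : set R) (f : R -> R) : set 'rV[R]_2 :=
  [set \row_(i < 2) (if i == ord0 then x else f x) | x in X].

Definition unif_cont_on (X : set R) (f : R -> R) : Prop :=
  forall eps : R, 0 < eps -> exists2 del : R, 0 < del &
    forall x y, X x -> X y -> `|x - y| < del -> `|f x - f y| < eps.

Definition dimB (X : set R) : \bar R := upper_box_dim (embed1 X).

Definition dimGB (X : set R) : \bar R :=
  ereal_sup [set upper_box_dim (graph X f) | f in unif_cont_on X].

End BoxDim.

From mathcomp Require Import all_boot all_order all_algebra.
From mathcomp Require Import all_classical all_reals all_analysis.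
From mathcomp Require Import zify ring lra.
Import Order.TTheory GRing.Theory Num.Theory.
Set Implicit Arguments. Unset Strict Implicit. Unset Printing Implicit Defensive.
Local Open Scope classical_set_scope.
Local Open Scope ring_scope.

(* Given [r < 2 dim_B X], take [s] with [r < 2 s < 2 dim_B X] and set
   [F = sum_n c_n^2 T(x / (c_n sg_n))], where [T] is the tent map, [c_(n+1) = c_n sg_n / 16]
   and [sg_n] is chosen very small. On a cell of the [c_n sg_n]-grid the [n]-th term then
   dominates: the earlier terms have small total slope, the later ones small total height.
   Hence two points of [X] in a common [c_n sg_n]-column at distance [>= 2 sg_n^2] have values
   differing by more than [c_n sg_n], so every third of the [N_(sg_n^2)(X) > sg_n^(-2s)]
   columns meeting [X] yields its own [c_n sg_n]-cell of the graph of [F], and [sg_n] is taken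
   small enough with respect to [c_n] for this number to exceed [(c_n sg_n)^(-r)].
   Being a uniform limit of Lipschitz functions, [F] is uniformly continuous. *)

Section Tent.
Variable R : realType.
Implicit Types (u v : R) (i j m : int).

(* The distance from [u] to [2 Z]: a 2-periodic triangle wave with values in [0, 1]. *)
Definition tent u : R :=
  Num.min (u - 2 * (Num.floor (u / 2))%:~R) (2 * (Num.floor (u / 2))%:~R + 2 - u).

Let floor_half_bounds u :
  2 * (Num.floor (u / 2))%:~R <= u < 2 * (Num.floor (u / 2))%:~R + 2.
Proof.
have := floor_le (u / 2); have := floorD1_gt (u / 2); rewrite intrD.
set k : R := (Num.floor (u / 2))%:~R => h1 h2; apply/andP; split; lra.
Qed.

Lemma tent_le_dist u i : tent u <= `|u - 2 * i%:~R|.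
Proof.
have /andP[h1 h2] := floor_half_bounds u; rewrite /tent ge_min.
set k := Num.floor (u / 2) in h1 h2 *.
have [ik|ki] := lerP i k.
  have : i%:~R <= k%:~R :> R by rewrite ler_int.
  by move=> h; rewrite ger0_norm; lra.
have : (k + 1)%:~R <= i%:~R :> R by rewrite ler_int; lia.
by rewrite intrD => h; rewrite ler0_norm; lra.
Qed.

Lemma tent_eq_dist u : exists i, tent u = `|u - 2 * i%:~R|.
Proof.
have /andP[h1 h2] := floor_half_bounds u; rewrite /tent.
set k := Num.floor (u / 2) in h1 h2 *.
have [h|h] := leP (u - 2 * k%:~R) (2 * k%:~R + 2 - u).
  by exists k; rewrite ger0_norm; lra.
by exists (k + 1); rewrite intrD ler0_norm; lra.
Qed.

Lemma tent_ge0 u : 0 <= tent u.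
Proof. by have [i ->] := tent_eq_dist u. Qed.

Lemma tent_le1 u : tent u <= 1.
Proof.
by rewrite /tent ge_min; apply/orP; case: (lerP (u - 2 * _) 1) => ?; [left|right; lra].
Qed.

Lemma tent_lipschitz u v : `|tent u - tent v| <= `|u - v|.
Proof.
have [i ei] := tent_eq_dist u; have [j ej] := tent_eq_dist v.
have uj := tent_le_dist u j; have vi := tent_le_dist v i.
have := ler_distD v u (2 * j%:~R); have := ler_distD u v (2 * i%:~R).
rewrite (distrC v u) => tu tv; rewrite ler_norml; apply/andP; split; lra.
Qed.

Lemma tent_on_period u m : 2 * m%:~R <= u <= 2 * m%:~R + 2 ->
  tent u = Num.min (u - 2 * m%:~R) (2 * m%:~R + 2 - u).
Proof.
move=> /andP[h1 h2]; apply/le_anti; apply/andP; split.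
  rewrite le_min; apply/andP; split.
    by have := tent_le_dist u m; rewrite ger0_norm //; lra.
  by have := tent_le_dist u (m + 1); rewrite intrD ler0_norm //; lra.
have [i ->] := tent_eq_dist u; rewrite ge_min.
have [im|mi] := lerP i m.
  have : i%:~R <= m%:~R :> R by rewrite ler_int.
  by move=> h; rewrite ger0_norm; lra.
have : (m + 1)%:~R <= i%:~R :> R by rewrite ler_int; lia.
by rewrite intrD => h; rewrite ler0_norm; lra.
Qed.

Lemma tent_isometry_on_unit j u v :
  j%:~R <= u <= j%:~R + 1 -> j%:~R <= v <= j%:~R + 1 -> `|tent u - tent v| = `|u - v|.
Proof.
have [m [->|->]] : exists m, j = 2 * m \/ j = 2 * m + 1 by exists (j %/ 2)%Z; lia.
  have up w : 2 * m%:~R <= w <= 2 * m%:~R + 1 -> tent w = w - 2 * m%:~R.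
    move=> /andP[w1 w2]; rewrite (tent_on_period (m := m)); last by apply/andP; split; lra.
    by rewrite min_l //; lra.
  rewrite intrM => /up -> /up ->; congr `|_|; ring.
have down w : 2 * m%:~R + 1 <= w <= 2 * m%:~R + 1 + 1 -> tent w = 2 * m%:~R + 2 - w.
  move=> /andP[w1 w2]; rewrite (tent_on_period (m := m)); last by apply/andP; split; lra.
  by rewrite min_r //; lra.
rewrite intrD intrM => /down -> /down ->; rewrite distrC; congr `|_|; ring.
Qed.

End Tent.

Section WaveSeries.
Variables (R : realType) (c s : nat -> R).
Implicit Types (n : nat) (x y : R).

Definition wave n x := c n ^+ 2 * tent (x / (c n * s n)).
Definition wave_sum n x := \sum_(k < n) wave k x.
Definition wave_series x := sup (range (wave_sum ^~ x)).
Definition wave_lip n := \sum_(k < n) c k / s k.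

Hypothesis c_gt0 : forall n, 0 < c n.
Hypothesis s_gt0 : forall n, 0 < s n.
Hypothesis c_decay : forall n, 2 * c n.+1 ^+ 2 <= c n ^+ 2.

Lemma wave_ge0 n x : 0 <= wave n x.
Proof. by rewrite mulr_ge0 ?sqr_ge0 ?tent_ge0. Qed.

Lemma wave_le n x : wave n x <= c n ^+ 2.
Proof. by rewrite -[leRHS]mulr1 ler_wpM2l ?sqr_ge0 ?tent_le1. Qed.

Lemma wave_sumS n x : wave_sum n.+1 x = wave_sum n x + wave n x.
Proof. by rewrite /wave_sum big_ord_recr. Qed.

Lemma wave_sum0 x : wave_sum 0 x = 0.
Proof. by rewrite /wave_sum big_ord0. Qed.

Lemma wave_sum_le n m x : (n <= m)%N -> wave_sum n x <= wave_sum m x.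
Proof.
move/subnKC <-; elim: (m - n)%N => [|i IH]; first by rewrite addn0.
by rewrite addnS wave_sumS; have := wave_ge0 (n + i) x; lra.
Qed.

(* [2 * c n ^+ 2] bounds the total height of the waves from the [n]-th on. *)
Lemma wave_sum_slack_le n m x : (n <= m)%N ->
  wave_sum m x + 2 * c m ^+ 2 <= wave_sum n x + 2 * c n ^+ 2.
Proof.
move/subnKC <-; elim: (m - n)%N => [|i IH]; first by rewrite addn0.
by rewrite addnS wave_sumS; have := wave_le (n + i) x; have := c_decay (n + i); lra.
Qed.

Lemma wave_sum_bounded x : has_sup (range (wave_sum ^~ x)).
Proof.
split; first by exists (wave_sum 0 x), 0%N.
exists (2 * c 0 ^+ 2) => _ [n _ <-].
have := wave_sum_slack_le x (leq0n n); rewrite wave_sum0.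
have := sqr_ge0 (c n); lra.
Qed.

Lemma wave_series_tail n x : 0 <= wave_series x - wave_sum n x <= 2 * c n ^+ 2.
Proof.
apply/andP; split.
  by rewrite subr_ge0; apply: sup_upper_bound; [exact: wave_sum_bounded | exists n].
rewrite lerBlDl; apply: ge_sup; first by exists (wave_sum 0 x), 0%N.
move=> _ [m _ <-]; have [nm|/ltnW mn] := leqP n m.
  by have := wave_sum_slack_le x nm; have := sqr_ge0 (c m); lra.
by have := wave_sum_le x mn; have := sqr_ge0 (c n); lra.
Qed.

Lemma wave_series_tail_dist n x y :
  `|(wave_series x - wave_sum n x) - (wave_series y - wave_sum n y)| <= 2 * c n ^+ 2.
Proof.
have /andP[x1 x2] := wave_series_tail n x; have /andP[y1 y2] := wave_series_tail n y.
by rewrite ler_norml; apply/andP; split; lra.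
Qed.

Let cs_gt0 n : 0 < c n * s n. Proof. by rewrite mulr_gt0. Qed.

Lemma wave_lipschitz n x y : `|wave n x - wave n y| <= c n / s n * `|x - y|.
Proof.
rewrite -mulrBr normrM ger0_norm ?sqr_ge0 //.
have := tent_lipschitz (x / (c n * s n)) (y / (c n * s n)).
rewrite -mulrBl normrM [`|(_)^-1|]gtr0_norm ?invr_gt0 // => h.
have -> : c n / s n = c n ^+ 2 * (c n * s n)^-1.
  by field; apply/andP; split; rewrite gt_eqF.
by rewrite -mulrA ler_wpM2l ?sqr_ge0 // [leRHS]mulrC.
Qed.

Lemma wave_dist_on_cell n x y :
  Num.floor (x / (c n * s n)) = Num.floor (y / (c n * s n)) ->
  `|wave n x - wave n y| = c n / s n * `|x - y|.
Proof.
move=> exy; rewrite -mulrBr normrM ger0_norm ?sqr_ge0 //.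
rewrite (@tent_isometry_on_unit _ (Num.floor (y / (c n * s n)))).
- rewrite -mulrBl normrM [`|(_)^-1|]gtr0_norm ?invr_gt0 //.
  by field; apply/andP; split; rewrite gt_eqF.
- by rewrite -exy floor_le /= ltW // -intrD1 floorD1_gt.
- by rewrite floor_le /= ltW // -intrD1 floorD1_gt.
Qed.

Lemma wave_sum_lipschitz n x y : `|wave_sum n x - wave_sum n y| <= wave_lip n * `|x - y|.
Proof.
elim: n => [|n IH]; first by rewrite !wave_sum0 subrr normr0 /wave_lip big_ord0 mul0r.
rewrite !wave_sumS /wave_lip big_ord_recr /= -/(wave_lip n) mulrDl.
rewrite opprD addrACA; apply: (le_trans (ler_normD _ _)).
by apply: lerD => //; exact: wave_lipschitz.
Qed.

Lemma wave_lip_ge0 n : 0 <= wave_lip n.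
Proof. by rewrite sumr_ge0 // => k _; rewrite divr_ge0 // ltW. Qed.

Lemma wave_series_unif_cont (X : set R) :
  (forall e : R, 0 < e -> exists n, c n ^+ 2 < e) -> unif_cont_on X wave_series.
Proof.
move=> c_small eps eps_gt0.
have [n cn] : exists n, c n ^+ 2 < eps / 4 by apply: c_small; rewrite divr_gt0.
have lip_ge0 := wave_lip_ge0 n.
exists (eps / 2 / (wave_lip n + 1)); first by rewrite !divr_gt0 //; lra.
move=> x y _ _; rewrite ltr_pdivlMr; last lra.
rewrite mulrDr mulr1 => dxy.
have := wave_sum_lipschitz n x y; have := wave_series_tail_dist n x y.
have -> : wave_series x - wave_series y = (wave_sum n x - wave_sum n y) +
  ((wave_series x - wave_sum n x) - (wave_series y - wave_sum n y)) by ring.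
move=> hT; rewrite mulrC => hS.
by apply: le_lt_trans (ler_normD _ _) _; have := normr_ge0 (x - y); lra.
Qed.

(* On a cell of the [c n * s n]-grid the [n]-th wave has slope [c n / s n], the earlier ones
   total slope [<= c n / (4 s n)] and the later ones total height [<= c n * s n / 8]. *)
Lemma wave_series_oscillation n x y :
  4 * wave_lip n * s n <= c n -> 16 * c n.+1 ^+ 2 <= c n * s n ->
  Num.floor (x / (c n * s n)) = Num.floor (y / (c n * s n)) ->
  2 * s n ^+ 2 <= `|x - y| -> c n * s n < `|wave_series x - wave_series y|.
Proof.
move=> lip_small tail_small cell dxy.
set q := c n / s n; set D := `|x - y|.
have qs : q * s n = c n by rewrite divfK // gt_eqF.
have hw : `|wave n x - wave n y| = q * D := wave_dist_on_cell cell.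
have hS : `|wave_sum n x - wave_sum n y| <= q * D / 4.
  apply: le_trans (wave_sum_lipschitz n x y) _; rewrite mulrAC ler_wpM2r //.
  by rewrite ler_pdivlMr // -(ler_pM2r (s_gt0 n)) mulrAC qs mulrC mulrA.
have hT := wave_series_tail_dist n.+1 x y.
have qD : 2 * (c n * s n) <= q * D.
  apply: le_trans (ler_wpM2l (divr_ge0 (ltW (c_gt0 n)) (ltW (s_gt0 n))) dxy).
  by rewrite [leRHS](_ : _ = 2 * (c n * s n)) //; field; rewrite gt_eqF.
have : `|wave n x - wave n y| <= `|wave_series x - wave_series y| +
    `|wave_sum n x - wave_sum n y| + `|(wave_series x - wave_sum n.+1 x) -
                                        (wave_series y - wave_sum n.+1 y)|.
  have -> : wave n x - wave n y = (wave_series x - wave_series y) -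
      (wave_sum n x - wave_sum n y) - ((wave_series x - wave_sum n.+1 x) -
                                       (wave_series y - wave_sum n.+1 y)).
    by rewrite !wave_sumS; ring.
  by apply: (le_trans (ler_normB _ _)); rewrite lerD2r ler_normB.
by rewrite hw; have := cs_gt0 n; lra.
Qed.

End WaveSeries.

Lemma sum1_seqE (R : realType) (T : Type) (L : seq T) :
  (\sum_(k <- L) (1 : \bar R) = (size L)%:R%:E)%E.
Proof.
elim: L => [|x L IH]; first by rewrite big_nil.
by rewrite big_cons IH /= -EFinD -natr1 addrC.
Qed.

Lemma size_le_esum1 (R : realType) (T : choiceType) (S : set T) (L : seq T) :
  uniq L -> (forall k, k \in L -> S k) -> ((size L)%:R%:E <= esum S (fun _ => 1 : \bar R))%E.
Proof.
move=> uL LS; apply: esum_ge; exists [set` L]; first by split; [exact: finite_seq | exact: LS].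
by rewrite -fsbig_seq // sum1_seqE.
Qed.

Lemma esum1_gt (R : realType) (T : choiceType) (S : set T) (B : R) :
  (B%:E < esum S (fun _ => 1 : \bar R))%E ->
  exists L : seq T, [/\ uniq L, B < (size L)%:R & forall k, k \in L -> S k].
Proof.
move=> /ereal_sup_gt [_ [A [finA AS] <-]].
have [s eA] := (finite_seqP A).1 finA.
have -> : A = [set` undup s] by rewrite eA; apply/seteqP; split => k /=; rewrite mem_undup.
rewrite -fsbig_seq ?undup_uniq // sum1_seqE lte_fin => hB.
exists (undup s); split => //; first exact: undup_uniq.
by move=> k ks; apply: AS; rewrite eA /= -mem_undup.
Qed.

Lemma count_mod3_pigeonhole (T : Type) (L : seq T) (g : T -> int) :
  exists i : int, (size L <= 3 * count (fun k => (g k %% 3)%Z == i) L)%N.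
Proof.
pose n i := count (fun k => (g k %% 3)%Z == i) L.
have cover : (n 0 + n 1 + n 2 = size L)%N.
  rewrite /n {n}; elim: L => //= x L <-.
  have : (g x %% 3 = 0 \/ g x %% 3 = 1 \/ g x %% 3 = 2)%Z by lia.
  by case=> [->|[->|->]] /=; lia.
have [h0|h0] := leqP (size L) (3 * n 0); first by exists 0.
have [h1|h1] := leqP (size L) (3 * n 1); first by exists 1.
exists 2; rewrite -/(n 2); move: cover h0 h1; move: (n 0) (n 1) (n 2) => *; lia.
Qed.

Lemma grid_mod3_sep (R : realType) (delta x x' : R) (j j' : int) : 0 < delta ->
  (j %% 3 = j' %% 3)%Z -> j != j' ->
  j%:~R * delta <= x <= (j%:~R + 1) * delta -> j'%:~R * delta <= x' <= (j'%:~R + 1) * delta ->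
  2 * delta <= `|x - x'|.
Proof.
move=> d_gt0 jj' njj'.
wlog lt_jj' : j j' x x' jj' njj' / (j + 3 <= j')%R.
  move=> sym; have [|le_j'j] := boolP (j + 3 <= j')%R; first exact: sym.
  move=> hx hx'; rewrite distrC; apply: (sym j' j) => //; [by rewrite eq_sym | lia].
move=> /andP[_ x2] /andP[x'1 _].
have : (j + 3)%:~R * delta <= j'%:~R * delta by rewrite ler_pM2r // ler_int.
by rewrite intrD mulrDl mulrDl mul1r in x2 * => h; rewrite distrC ger0_norm; lra.
Qed.

Section GraphCells.
Variable R : realType.
Implicit Types (X : set R) (f : R -> R) (eta delta x y : R).

Lemma floor_div_bounds eta x : 0 < eta ->
  (Num.floor (x / eta))%:~R * eta <= x < ((Num.floor (x / eta))%:~R + 1) * eta.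
Proof.
move=> eta_gt0; apply/andP; split; first by rewrite -ler_pdivlMr // floor_le.
by rewrite -ltr_pdivrMr // -intrD1 floorD1_gt.
Qed.

Definition graph_cell eta x y : 'rV[int]_2 :=
  \row_(i < 2) (if i == ord0 then Num.floor (x / eta) else Num.floor (y / eta)).

Lemma graph_cell_meets X f eta x : 0 < eta -> X x ->
  (grid_cube eta (graph_cell eta x (f x)) `&` graph X f) !=set0.
Proof.
move=> eta_gt0 Xx; exists (\row_(i < 2) (if i == ord0 then x else f x)).
split; last by exists x.
move=> i; rewrite !mxE; case: (i == ord0);
  by [case/andP: (floor_div_bounds x eta_gt0) => -> /ltW |
      case/andP: (floor_div_bounds (f x) eta_gt0) => -> /ltW].
Qed.

Lemma graph_cell_eq eta x y x' y' : 0 < eta ->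
  graph_cell eta x y = graph_cell eta x' y' ->
  Num.floor (x / eta) = Num.floor (x' / eta) /\ `|y - y'| < eta.
Proof.
move=> eta_gt0 e; have := congr1 (fun M : 'rV[int]_2 => M ord0 ord0) e.
have := congr1 (fun M : 'rV[int]_2 => M ord0 (lift ord0 ord0)) e.
rewrite !mxE /= => ey ex; split => //.
have /andP[y1 y2] := floor_div_bounds y eta_gt0.
have /andP[y'1 y'2] := floor_div_bounds y' eta_gt0.
by rewrite ey in y1 y2; rewrite ltr_norml; apply/andP; split; lra.
Qed.

Lemma embed1_cell_repr X delta (L : seq 'rV[int]_1) :
  (forall k, k \in L -> (grid_cube delta k `&` embed1 X) !=set0) ->
  exists p : 'rV[int]_1 -> R, forall k, k \in L ->
    X (p k) /\ (k ord0 ord0)%:~R * delta <= p k <= ((k ord0 ord0)%:~R + 1) * delta.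
Proof.
move=> LX; suff /choice[p hp] : forall k, exists x, k \in L ->
    X x /\ (k ord0 ord0)%:~R * delta <= x <= ((k ord0 ord0)%:~R + 1) * delta by exists p.
move=> k; have [/LX [y [hk [x Xx exy]]]|_] := boolP (k \in L); last by exists 0.
by exists x => _; split => //; have := hk ord0; rewrite -exy mxE.
Qed.

(* Representatives of columns whose indices agree mod 3 are [2 delta] apart, hence by the
   oscillation hypothesis they lie in pairwise distinct [eta]-cells of the graph. *)
Lemma Ndelta_graph_ge X f eta delta (L : seq 'rV[int]_1) :
  0 < eta -> 0 < delta -> uniq L ->
  (forall k, k \in L -> (grid_cube delta k `&` embed1 X) !=set0) ->
  (forall x y, X x -> X y -> Num.floor (x / eta) = Num.floor (y / eta) ->
     2 * delta <= `|x - y| -> eta < `|f x - f y|) ->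
  (((size L)%:R / 3)%:E <= Ndelta eta (graph X f))%E.
Proof.
move=> eta_gt0 d_gt0 uL LX osc.
have [p hp] := embed1_cell_repr LX.
have [i hi] := count_mod3_pigeonhole L (fun k => k ord0 ord0).
set L3 := [seq k <- L | ((k : 'rV[int]_1) ord0 ord0 %% 3)%Z == i].
set cell := fun k => graph_cell eta (p k) (f (p k)).
have cell_inj : {in L3 &, injective cell}.
  move=> k k'; rewrite !mem_filter => /andP[/eqP ik kL] /andP[/eqP ik' kL'] ekk'.
  apply/eqP/negPn/negP => nkk'.
  have [[Xp p1] [Xp' p2]] := (hp k kL, hp k' kL').
  have [ex ey] := graph_cell_eq eta_gt0 ekk'.
  have nk : k ord0 ord0 != k' ord0 ord0.
    by apply: contra nkk' => /eqP e; apply/eqP/matrixP => a b; rewrite !ord1.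
  have := osc _ _ Xp Xp' ex (grid_mod3_sep d_gt0 (etrans ik (esym ik')) nk p1 p2).
  by rewrite ltNge ltW.
have uniq_cells : uniq (map cell L3) by rewrite map_inj_in_uniq // filter_uniq.
have cells_meet q : q \in map cell L3 -> (grid_cube eta q `&` graph X f) !=set0.
  move=> /mapP[k kL3 ->]; apply: graph_cell_meets => //.
  by move: kL3; rewrite mem_filter => /andP[_ /hp[]].
apply: le_trans _ (size_le_esum1 _ uniq_cells cells_meet).
by rewrite lee_fin size_map size_filter ler_pdivrMr // -natrM mulnC ler_nat.
Qed.

End GraphCells.

Section BoxRatio.
Variables (R : realType) (d : nat) (F : set 'rV[R]_d).

Let neg_ln_gt0 (delta : R) : 0 < delta < 1 -> 0 < - ln delta.
Proof. by move=> /andP[d0 d1]; rewrite oppr_gt0 ln_lt0 // d0 d1. Qed.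

Lemma Ndelta_gt_box_ratio (delta s : R) : 0 < delta < 1 -> 0 < s ->
  (s%:E < box_ratio F delta)%E -> ((expR (s * - ln delta))%:E < Ndelta delta F)%E.
Proof.
move=> /neg_ln_gt0 l0 s0; rewrite /box_ratio.
case: (Ndelta delta F) => [m| |] //=; last by move=> _; rewrite ltry.
rewrite !lte_fin ltr_pdivlMr // => hm.
have [m0|m0] := lerP m 0; last by rewrite -[ltRHS](lnK (x := m)) ?posrE // ltr_expR.
by rewrite (ln0 m0) in hm; have := mulr_gt0 s0 l0; lra.
Qed.

Lemma box_ratio_ge (eta r B : R) : 0 < eta < 1 -> 0 < B ->
  (B%:E <= Ndelta eta F)%E -> r * - ln eta <= ln B -> (r%:E <= box_ratio F eta)%E.
Proof.
move=> /neg_ln_gt0 l0 B0; rewrite /box_ratio.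
case: (Ndelta eta F) => [m| |] //=; last by move=> *; rewrite leey.
rewrite !lee_fin => hm hr; rewrite ler_pdivlMr //; apply: (le_trans hr).
by rewrite ler_ln ?posrE // (lt_le_trans B0).
Qed.

Lemma Ndelta_ge0 (delta : R) : (0 <= Ndelta delta F)%E.
Proof. exact: esum_ge0. Qed.

Lemma Ndelta_eq0_or_ge1 (delta m : R) : Ndelta delta F = m%:E -> m = 0 \/ 1 <= m.
Proof.
move=> hm; have := Ndelta_ge0 delta; rewrite hm lee_fin le_eqVlt.
case/orP=> [/eqP <-|m0]; [by left | right].
have := m0; rewrite -lte_fin -hm => /esum1_gt [L [uL sL LS]].
have : ((size L)%:R%:E <= Ndelta delta F)%E := size_le_esum1 _ uL LS.
rewrite hm lee_fin; apply: le_trans.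
by rewrite ler1n -(ltr0n R).
Qed.

Lemma box_ratio_ge0 (delta : R) : 0 < delta < 1 -> (0 <= box_ratio F delta)%E.
Proof.
move=> /neg_ln_gt0 l0; rewrite /box_ratio.
have := Ndelta_ge0 delta; case hN: (Ndelta delta F) => [m| |] //= _.
rewrite lee_fin divr_ge0 ?(ltW l0) //.
by case: (Ndelta_eq0_or_ge1 hN) => [->|/ln_ge0 //]; rewrite ln0.
Qed.

Lemma upper_box_dim_ge (r : \bar R) :
  (forall e, 0 < e < 1 -> exists2 eta, 0 < eta < e & (r <= box_ratio F eta)%E) ->
  (r <= upper_box_dim F)%E.
Proof.
move=> H; apply/ereal_infP => _ [e /= he <-]; rewrite in_itv /= in he.
have [eta heta hr] := H e he; apply: (le_trans hr); apply: ereal_sup_ubound.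
by exists eta => //=; rewrite in_itv.
Qed.

Lemma upper_box_dim_ge0 : (0 <= upper_box_dim F)%E.
Proof.
apply: upper_box_dim_ge => e /andP[e0 e1]; exists (e / 2).
  by apply/andP; split; lra.
by apply: box_ratio_ge0; apply/andP; split; lra.
Qed.

Lemma upper_box_dim_gt (s : \bar R) : (s < upper_box_dim F)%E ->
  forall e, 0 < e < 1 -> exists2 delta, 0 < delta < e & (s < box_ratio F delta)%E.
Proof.
move=> H e he.
have : (s < ereal_sup [set box_ratio F delta | delta in `]0%R, e[ ])%E.
  by apply: (lt_le_trans H); apply: ereal_inf_lbound; exists e => //=; rewrite in_itv.
by move=> /ereal_sup_gt [_ [delta hd <-] hs]; exists delta => //; rewrite in_itv in hd.
Qed.

End BoxRatio.

Lemma exists_invS_lt (R : realType) (e : R) : 0 < e -> exists n : nat, n.+1%:R^-1 < e.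
Proof.
by move=> e0; exists (Num.truncn e^-1); rewrite invf_plt ?posrE ?ltr0n ?truncnS_gt.
Qed.

(* Where the exponent [r] of the target dimension is gained: with [N > sg^(-2s)] columns at
   scale [sg^2] and [sg <= (3 c^r)^(1/(2s - r))], one has [N/3 >= (c sg)^(-r)]. *)
Lemma ln_count_ge (R : realType) (s r c sg N : R) : 0 < c -> 0 < sg -> 0 < N -> r < 2 * s ->
  sg <= expR (- ((ln 3 + r * - ln c) / (2 * s - r))) -> s * - ln (sg ^+ 2) < ln N ->
  r * - ln (c * sg) <= ln (N / 3).
Proof.
move=> c0 sg0 N0 rs sg_le hN.
set K := (ln 3 + r * - ln c) / (2 * s - r).
have le_K : K <= - ln sg by rewrite lerNr -[leRHS]expRK ler_ln ?posrE ?expR_gt0.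
have : ln 3 + r * - ln c <= (2 * s - r) * - ln sg.
  rewrite (_ : ln 3 + r * - ln c = (2 * s - r) * K); last first.
    by rewrite /K; field; rewrite gt_eqF // subr_gt0.
  by rewrite ler_wpM2l //; lra.
rewrite lnM ?posrE // lnM ?posrE ?invr_gt0 // lnV ?posrE // lnXn // in hN *.
by move: hN; rewrite -mulr_natl; nra.
Qed.

Section Construction.
Variables (R : realType) (X : set R) (s r : R).
Implicit Types (c L : R) (n : nat).

Definition large_cover (delta : R) :=
  ((expR (s * - ln delta))%:E < Ndelta delta (embed1 X))%E.

(* The four requirements on the scale [sg n]: below 1, small enough for [ln_count_ge],
   small compared with the slope of the waves already placed, and tending to 0. *)
Definition scale_bound c L n : R :=
  Num.min (Num.min (1 / 2) (expR (- ((ln 3 + r * - ln c) / (2 * s - r)))))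
          (Num.min (c / (4 * L + 1)) n.+1%:R^-1).

Lemma scale_bound_gt0 c L n : 0 < c -> 0 <= L -> 0 < scale_bound c L n.
Proof.
by move=> c0 L0; rewrite !lt_min expR_gt0 invr_gt0 ltr0n !divr_gt0 //; lra.
Qed.

Lemma scale_bound_lt1 c L n : scale_bound c L n < 1.
Proof. by rewrite !gt_min; apply/orP; left; apply/orP; left; lra. Qed.

Variable pick : R -> R.
Hypothesis pickP : forall e, 0 < e < 1 -> 0 < pick e < e /\ large_cover (pick e ^+ 2).

Fixpoint params n : R * R :=
  if n is m.+1 then
    let: (c, L) := params m in let sg := pick (scale_bound c L m) in (c * sg / 16, L + c / sg)
  else (1 / 2, 0).

Definition cseq n := (params n).1.
Definition lseq n := (params n).2.
Definition sseq n := pick (scale_bound (cseq n) (lseq n) n).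

Lemma cseqS n : cseq n.+1 = cseq n * sseq n / 16.
Proof. by rewrite /sseq /cseq /lseq /=; case: (params n). Qed.

Lemma lseqS n : lseq n.+1 = lseq n + cseq n / sseq n.
Proof. by rewrite /sseq /cseq /lseq /=; case: (params n). Qed.

Lemma params_spec n : [/\ 0 < cseq n <= 1 / 2, 0 <= lseq n,
  0 < sseq n < scale_bound (cseq n) (lseq n) n & large_cover (sseq n ^+ 2)].
Proof.
have pick_spec c L m : 0 < c -> 0 <= L ->
    0 < pick (scale_bound c L m) < scale_bound c L m /\ large_cover (pick (scale_bound c L m) ^+ 2).
  by move=> c0 L0; apply: pickP; rewrite scale_bound_gt0 ?scale_bound_lt1.
elim: n => [|n [/andP[c0 c1] L0 /andP[s0 s1] _]].
  have := pick_spec (1 / 2) 0 0%N ltac:(lra) (lexx _).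
  by rewrite /sseq /cseq /lseq /= => -[]; split => //; apply/andP; split; lra.
have s_lt1 : sseq n < 1 := lt_trans s1 (scale_bound_lt1 _ _ _).
have c'0 : 0 < cseq n.+1 by rewrite cseqS !divr_gt0 // mulr_gt0.
have L'0 : 0 <= lseq n.+1 by rewrite lseqS addr_ge0 // divr_ge0 // ltW.
have [s'1 s'2] := pick_spec _ _ n.+1 c'0 L'0; split => //; apply/andP; split => //.
by rewrite cseqS ler_pdivrMr //; have := ler_pM (ltW c0) (ltW s0) c1 (ltW s_lt1); lra.
Qed.

Lemma cseq_gt0 n : 0 < cseq n.
Proof. by have [/andP[]] := params_spec n. Qed.

Lemma cseq_le n : cseq n <= 1 / 2.
Proof. by have [/andP[]] := params_spec n. Qed.

Lemma lseq_ge0 n : 0 <= lseq n.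
Proof. by have [] := params_spec n. Qed.

Lemma sseq_gt0 n : 0 < sseq n.
Proof. by have [_ _ /andP[]] := params_spec n. Qed.

Lemma sseq_bounds n : [/\ sseq n < 1 / 2,
  sseq n < expR (- ((ln 3 + r * - ln (cseq n)) / (2 * s - r))),
  sseq n < cseq n / (4 * lseq n + 1) & sseq n < n.+1%:R^-1].
Proof.
have [_ _ /andP[_]] := params_spec n.
by rewrite !lt_min => /andP[/andP[-> ->] /andP[-> ->]].
Qed.

Lemma sseq_lt1 n : sseq n < 1.
Proof. by have [] := sseq_bounds n; lra. Qed.

Lemma wave_lip_lseq n : wave_lip cseq sseq n = lseq n.
Proof.
elim: n => [|n IH]; first by rewrite /wave_lip big_ord0.
by rewrite /wave_lip big_ord_recr /= -/(wave_lip _ _ n) IH lseqS.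
Qed.

Lemma wave_lip_small n : 4 * wave_lip cseq sseq n * sseq n <= cseq n.
Proof.
have [_ _ + _] := sseq_bounds n; have := lseq_ge0 n; have := sseq_gt0 n.
rewrite wave_lip_lseq ltr_pdivlMr; last by have := lseq_ge0 n; lra.
by rewrite mulrDr mulr1 mulrA; lra.
Qed.

Lemma cseq_tail_small n : 16 * cseq n.+1 ^+ 2 <= cseq n * sseq n.
Proof.
have cs0 : 0 < cseq n * sseq n by rewrite mulr_gt0 ?cseq_gt0 ?sseq_gt0.
have cs1 : cseq n * sseq n <= 1.
  by have := ler_pM (ltW (cseq_gt0 n)) (ltW (sseq_gt0 n)) (cseq_le n) (ltW (sseq_lt1 n)); lra.
rewrite cseqS (_ : 16 * _ = cseq n * sseq n * (cseq n * sseq n / 16)); last by field.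
by rewrite -[leRHS]mulr1 ler_wpM2l ?ltW //; lra.
Qed.

Lemma cseq_decay n : 2 * cseq n.+1 ^+ 2 <= cseq n ^+ 2.
Proof.
rewrite cseqS (_ : 2 * _ = cseq n ^+ 2 * (sseq n ^+ 2 / 128)); last by field.
rewrite -[leRHS]mulr1 ler_wpM2l ?sqr_ge0 //.
have : sseq n ^+ 2 <= 1 by rewrite expr_le1 ?(ltW (sseq_gt0 n)) ?(ltW (sseq_lt1 n)).
lra.
Qed.

Lemma cseq_vanish (e : R) : 0 < e -> exists n, cseq n ^+ 2 < e.
Proof.
move=> e0; have [n ne] := exists_invS_lt e0; exists n.+1.
have c0 := cseq_gt0 n.+1; have c1 := cseq_le n.+1.
have c_le : cseq n.+1 <= sseq n.
  by rewrite cseqS ler_pdivrMr // mulrC ler_wpM2l ?ltW ?sseq_gt0 //; have := cseq_le n; lra.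
have [_ _ _ s_lt] := sseq_bounds n.
rewrite expr2; apply: le_lt_trans (ler_pM (ltW c0) (ltW c0) c1 c_le) _.
by apply: lt_trans ne; apply: le_lt_trans s_lt; have := sseq_gt0 n; lra.
Qed.

Hypothesis r_lt2s : r < 2 * s.

Local Notation F := (wave_series cseq sseq).

Lemma wave_series_params_unif_cont : unif_cont_on X F.
Proof. exact: wave_series_unif_cont cseq_gt0 sseq_gt0 cseq_decay _ cseq_vanish. Qed.

Lemma cseq_sseq_bounds n : 0 < cseq n * sseq n < sseq n.
Proof.
have c0 := cseq_gt0 n; have s0 := sseq_gt0 n; rewrite mulr_gt0 //=.
by rewrite gtr_pMl //; have := cseq_le n; lra.
Qed.

Lemma box_ratio_graph_ge n : (r%:E <= box_ratio (graph X F) (cseq n * sseq n))%E.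
Proof.
have c0 := cseq_gt0 n; have s0 := sseq_gt0 n.
have /andP[eta_gt0 eta_lt] := cseq_sseq_bounds n.
have [_ _ _ /esum1_gt [L [uL sizeL LX]]] := params_spec n.
have N_gt0 : 0 < (size L)%:R :> R by apply: lt_trans sizeL; exact: expR_gt0.
have [_ sseq_log _ _] := sseq_bounds n.
apply: (box_ratio_ge (B := (size L)%:R / 3)).
- by rewrite eta_gt0 (lt_trans eta_lt) ?sseq_lt1.
- by rewrite divr_gt0.
- apply: Ndelta_graph_ge uL LX _ => //; first by rewrite exprn_gt0.
  move=> x y _ _; apply: wave_series_oscillation; rewrite ?wave_lip_small ?cseq_tail_small //.
  + exact: cseq_gt0.
  + exact: sseq_gt0.
  + exact: cseq_decay.
- apply: ln_count_ge (ltW sseq_log) _ => //.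
  by rewrite -ltr_expR lnK ?posrE.
Qed.

Lemma graph_upper_box_dim_ge : (r%:E <= upper_box_dim (graph X F))%E.
Proof.
apply: upper_box_dim_ge => e /andP[e0 _]; have [n ne] := exists_invS_lt e0.
exists (cseq n * sseq n); last exact: box_ratio_graph_ge.
have /andP[-> lt_s] := cseq_sseq_bounds n; have [_ _ _ s_lt] := sseq_bounds n.
exact: lt_trans lt_s (lt_trans s_lt ne).
Qed.

End Construction.

Lemma dimGB_ge (R : realType) (X : set R) (f : R -> R) :
  unif_cont_on X f -> (upper_box_dim (graph X f) <= dimGB X)%E.
Proof. by move=> hf; apply: ereal_sup_ubound; exists f. Qed.

Lemma dimGB_ge0 (R : realType) (X : set R) : (0 <= dimGB X)%E.
Proof.
apply: le_trans (dimGB_ge (f := fun=> 0) _); first exact: upper_box_dim_ge0.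
by move=> eps e0; exists 1 => // x y _ _ _; rewrite subrr normr0.
Qed.

Lemma dimGB_ge_of_dimB_gt (R : realType) (X : set R) (s r : R) :
  0 < r -> r < 2 * s -> (s%:E < dimB X)%E -> (r%:E <= dimGB X)%E.
Proof.
move=> r_gt0 rs sX; have s_gt0 : 0 < s by lra.
suff /choice[pick pickP] : forall e, exists p, 0 < e < 1 ->
    0 < p < e /\ large_cover X s (p ^+ 2).
  apply: le_trans (graph_upper_box_dim_ge pickP rs) _.
  exact/dimGB_ge/wave_series_params_unif_cont.
move=> e; have [/andP[e0 e1]|_] := boolP (0 < e < 1); last by exists 0.
have e2 : 0 < e ^+ 2 < 1 by rewrite exprn_gt0 // expr_lt1 // ltW.
have [d /andP[d0 de] hd] := upper_box_dim_gt sX e2.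
exists (Num.sqrt d) => _; rewrite sqr_sqrtr ?ltW // sqrtr_gt0 d0; split.
  by rewrite -(ltr_pXn2r (_ : 0 < 2)%N) ?nnegrE ?sqrtr_ge0 ?ltW // sqr_sqrtr ?ltW.
apply: Ndelta_gt_box_ratio hd => //; rewrite d0 (lt_trans de) //.
by case/andP: e2.
Qed.

Lemma le_ereal_approx (R : realType) (x y : \bar R) :
  (forall r : R, (r%:E < x)%E -> (r%:E <= y)%E) -> (x <= y)%E.
Proof.
case: x => [x| |] H; last by rewrite leNye.
- case: y H => [y| |] H; last by have := H (x - 1) ltac:(rewrite lte_fin; lra).
  + rewrite lee_fin leNgt; apply/negP => yx.
    by have := H ((x + y) / 2) ltac:(rewrite lte_fin; lra); rewrite lee_fin; lra.
  + by rewrite leey.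
- case: y H => [y| |] H //.
  + by have := H (y + 1) (ltry _); rewrite lee_fin gerDl ler10.
  + by have := H 0 (ltry _).
Qed.

Lemma lt_mul2_ereal (R : realType) (r : R) (a : \bar R) :
  (r%:E < 2%:E * a)%E -> exists s : R, r < 2 * s /\ (s%:E < a)%E.
Proof.
case: a => [a| |] /=.
- by rewrite -EFinM lte_fin => h; exists ((r / 2 + a) / 2); rewrite lte_fin; split; lra.
- by move=> _; exists (r / 2 + 1); split; [lra | exact: ltry].
- by rewrite mulrNy gtr0_sg // mul1e ltNge leNye.
Qed.

Theorem theorem2 (R : realType) (X : set R) (a : \bar R) :
  X `<=` `[0, 1] -> dimB X = a -> (2%:E * a <= dimGB X)%E.
Proof.
move=> _ <-; apply: le_ereal_approx => r /lt_mul2_ereal [s [rs sX]].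
have [r_le0|r_gt0] := lerP r 0; last exact: dimGB_ge_of_dimB_gt r_gt0 rs sX.
by apply: le_trans (dimGB_ge0 X); rewrite lee_fin.
Qed.
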